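(* Let $H$ be an acyclic simple digraph, let $k$ be a positive integer, and let $T$ be a tournament that does not contain $k$ pairwise vertex-disjoint topological minor copies of $H$. Then there is a set $X$ of at most $2^{|V(H)|}k$ vertices of $T$ such that $T-X$ does not contain $H$ as a topological minor.
   Context: A tournament is a simple digraph with exactly one arc between every pair of distinct vertices. A topological minor copy of $H$ in a digraph $G$ is a subgraph $\widehat H$ of $G$ with a map sending vertices of $H$ to distinct vertices of $\widehat H$ and arcs $(u,v)$ of $H$ to directed paths from the image of $u$ to the image of $v$ that are internally vertex-disjoint, contain no image of a vertex of $H$ as an internal vertex, and together cover every arc and every non-image vertex of $\widehat H$ exactly once; $G$ contains $H$ as a topological minor if it has such a subgraph. $T-X$ is the subtournament induced by $V(T)\setminus X$. *)

From mathcomp Require Import all_boot.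
Set Implicit Arguments. Unset Strict Implicit. Unset Printing Implicit Defensive.

(* A simple digraph: no loops (parallel arcs are impossible for a relation). *)
Definition simple_digraph (V : finType) (E : rel V) : Prop :=
  forall x, ~~ E x x.

Definition acyclic (V : finType) (E : rel V) : Prop :=
  forall x y, E x y -> ~~ connect E y x.

Definition tournament (V : finType) (E : rel V) : Prop :=
  (forall x, ~~ E x x) /\
  (forall x y, x != y -> (E x y || E y x) /\ ~~ (E x y && E y x)).

(* A topological-minor model of H = (VH, EH) in G = (V, E):
   phi maps vertices of H injectively to branch vertices of G, and for every
   arc (u,v) of H, P u v is the sequence of internal vertices of a directed
   path phi u -> ... -> phi v in G. *)
Definition is_topminor_model (VH V : finType) (EH : rel VH) (E : rel V)
  (phi : VH -> V) (P : VH -> VH -> seq V) : Prop :=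
  [/\ injective phi,
      (forall u v, EH u v ->
         path E (phi u) (rcons (P u v) (phi v)) /\
         uniq (phi u :: rcons (P u v) (phi v))),
      (forall u v w, EH u v -> phi w \notin P u v) &
      (forall u v u' v', EH u v -> EH u' v' -> (u, v) != (u', v') ->
         forall x, x \in P u v -> x \notin P u' v')].

Definition tm_vset (VH V : finType) (EH : rel VH)
  (phi : VH -> V) (P : VH -> VH -> seq V) : {set V} :=
  [set x | [exists w, phi w == x] ||
           [exists u, [exists v, EH u v && (x \in P u v)]]].

Definition contains_topminor_in (VH V : finType) (EH : rel VH) (E : rel V)
  (S : {set V}) : Prop :=
  exists (phi : VH -> V) (P : VH -> VH -> seq V),
    is_topminor_model EH E phi P /\ tm_vset EH phi P \subset S.

Definition contains_k_disjoint_topminors (VH V : finType) (EH : rel VH)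
  (E : rel V) (k : nat) : Prop :=
  exists (phi : 'I_k -> VH -> V) (P : 'I_k -> VH -> VH -> seq V),
    (forall i, is_topminor_model EH E (phi i) (P i)) /\
    (forall i j, i != j -> [disjoint tm_vset EH (phi i) (P i) & tm_vset EH (phi j) (P j)]).

From mathcomp Require Import all_boot zify.

Set Implicit Arguments.
Unset Strict Implicit.
Unset Printing Implicit Defensive.

(* A tournament on 2^n vertices contains a transitive subtournament on n
   vertices: for any vertex x, the larger of its out- and in-neighbourhoods has
   at least 2^(n-1) vertices, and x goes first or last in a transitive
   subtournament found there.  An acyclic digraph H, numbered topologically,
   is a subgraph of the transitive tournament on |V(H)| vertices, hence a
   topological minor of T with trivial paths.  Since |V(H)| <= 2^|V(H)|, k
   disjoint such copies can be found greedily whenever 2^|V(H)| k <= |V(T)|;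
   otherwise X = V(T) does the job. *)

Section Acyclic.

Variables (V : finType) (E : rel V).
Hypothesis acE : acyclic E.

Lemma acyclic_ancestors_lt u v : E u v ->
  #|[set w | connect E w u]| < #|[set w | connect E w v]|.
Proof.
move=> Euv; apply/proper_card/properP; split.
  by apply/subsetP => w; rewrite !inE => /connect_trans; apply; apply: connect1.
by exists v; rewrite !inE ?connect0 ?acE.
Qed.

(* Sorting by number of ancestors gives a topological order. *)
Lemma acyclic_topological_numbering : exists ord : V -> nat,
  [/\ injective ord, forall u, ord u < #|V| & forall u v, E u v -> ord u < ord v].
Proof.
pose rank u := #|[set w | connect E w u]|.
pose le_rank := [rel u v | rank u <= rank v].
pose o := sort le_rank (enum V).
have o_mem u : u \in o by rewrite mem_sort mem_enum.
have o_sorted : sorted le_rank o by apply: sort_sorted => u v; apply: leq_total.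
have le_rank_trans : transitive le_rank by move=> ? ? ?; apply: leq_trans.
exists (index ^~ o); split.
- by move=> u v eq_uv; rewrite -(nth_index u (o_mem u)) eq_uv nth_index.
- by move=> u; rewrite cardE -(size_sort le_rank) index_mem.
- move=> u v Euv; rewrite ltnNge; apply/negP => le_vu.
  have := sorted_leq_index le_rank_trans (fun w => leqnn (rank w)) o_sorted
            v u (o_mem v) (o_mem u) le_vu.
  by rewrite /= leqNgt acyclic_ancestors_lt.
Qed.

End Acyclic.

Section Tournament.

Variables (V : finType) (E : rel V).
Hypothesis tourE : tournament E.

Lemma tournament_neighbourhoods x (S : {set V}) :
  #|S| <= (#|[set y in S | E x y]| + #|[set y in S | E y x]|).+1.
Proof.
have [_ tour] := tourE.
have sub : S \subset x |: ([set y in S | E x y] :|: [set y in S | E y x]).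
  apply/subsetP => y Sy; rewrite !inE Sy /=.
  by case: eqVneq => [|/tour [/orP []->]] //; rewrite orbT.
apply: leq_trans (subset_leq_card sub) _; rewrite cardsU1.
case: (leq_card_setU [set y in S | E x y] [set y in S | E y x]) => le_cardU _.
by case: (_ \notin _) => /=; lia.
Qed.

Lemma tournament_transitive_seq n (S : {set V}) : 2 ^ n <= #|S| ->
  exists s, [/\ size s = n, {subset s <= S} & pairwise E s].
Proof.
elim: n S => [|n IHn] S geS; first by exists [::].
have /card_gt0P [x Sx] : 0 < #|S| by apply: leq_trans geS; rewrite expn_gt0.
have := tournament_neighbourhoods x S; rewrite expnS in geS.
have [geOut _ | ltOut geIn] := leqP (2 ^ n) #|[set y in S | E x y]|; last first.
  have [|s [sz sS sE]] := IHn [set y in S | E y x]; first by lia.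
  exists (rcons s x); rewrite size_rcons sz pairwise_rcons sE andbT; split=> //.
    by move=> y; rewrite mem_rcons inE => /predU1P [->|/sS]; rewrite // inE => /andP [].
  by apply/allP => y /sS; rewrite inE => /andP [].
have [s [sz sS sE]] := IHn _ geOut.
exists (x :: s); rewrite /= sz sE andbT; split=> //.
  by move=> y; rewrite inE => /predU1P [->|/sS]; rewrite // inE => /andP [].
by apply/allP => y /sS; rewrite inE => /andP [].
Qed.

Lemma tournament_disjoint_transitive_seqs n k (S : {set V}) :
  2 ^ n * k <= #|S| -> exists t : nat -> seq V,
  [/\ forall i, i < k -> size (t i) = n /\ pairwise E (t i),
      forall i, i < k -> {subset t i <= S} &
      forall i j, i < k -> j < k -> i != j -> [disjoint t i & t j]].
Proof.
elim: k S => [|k IHk] S geS; first by exists (fun=> [::]).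
have [s0 [sz0 sub0 pw0]] : exists s, [/\ size s = n, {subset s <= S} & pairwise E s].
  by apply: tournament_transitive_seq; apply: leq_trans geS; rewrite leq_pmulr.
have geS' : 2 ^ n * k <= #|S :\: [set x in s0]|.
  have : #|[set x in s0]| <= n by rewrite cardsE -sz0 card_size.
  have := ltn_expl n (ltnSn 1); rewrite cardsD mulnS in geS *.
  have := subset_leq_card (subsetIr S [set x in s0]); lia.
have [t [tP tS tdis]] := IHk _ geS'.
have tS0 i x : i < k -> x \in t i -> x \notin s0.
  by move=> lt_ik /(tS i lt_ik); rewrite !inE => /andP [].
have ltkS i : i < k.+1 -> i = k \/ i < k by lia.
exists (fun i => if i == k then s0 else t i); split.
- move=> i /ltkS [->|lt_ik]; first by rewrite eqxx.
  by rewrite (ltn_eqF lt_ik); apply: tP.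
- move=> i /ltkS [->|lt_ik]; first by rewrite eqxx.
  by rewrite (ltn_eqF lt_ik) => x /(tS i lt_ik); rewrite inE => /andP [].
- move=> i j /ltkS [->|lt_ik] /ltkS [->|lt_jk]; first by rewrite eqxx.
  + rewrite eqxx (ltn_eqF lt_jk) => _.
    rewrite disjoint_has; apply/hasPn => x s0x /=.
    by apply: contraL s0x => /(tS0 _ _ lt_jk).
  + rewrite eqxx (ltn_eqF lt_ik) => _.
    by rewrite disjoint_has; apply/hasPn => x /(tS0 _ _ lt_ik).
  + by rewrite (ltn_eqF lt_ik) (ltn_eqF lt_jk); apply: tdis.
Qed.

End Tournament.

Section Embedding.

Variables (VH VT : finType) (EH : rel VH) (ET : rel VT).

Lemma transitive_seq_embedding (ord : VH -> nat) (x0 : VT) (s : seq VT) :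
  injective ord -> (forall u, ord u < #|VH|) ->
  (forall u v, EH u v -> ord u < ord v) ->
  simple_digraph ET -> pairwise ET s -> #|VH| <= size s ->
  [/\ injective (fun u => nth x0 s (ord u)),
      forall u, nth x0 s (ord u) \in s &
      forall u v, EH u v -> ET (nth x0 s (ord u)) (nth x0 s (ord v))].
Proof.
move=> ord_inj ord_lt ord_mono loopless pwET ge_s.
have ord_size u : ord u < size s by apply: leq_trans ge_s.
split=> [u v /eqP|u|u v /ord_mono].
- by rewrite nth_uniq ?(pairwise_uniq (fun x => negbTE (loopless x))) // => /eqP /ord_inj.
- exact: mem_nth.
- by move=> lt_uv; move/(pairwiseP x0): pwET; apply; rewrite ?inE.
Qed.

Lemma subgraph_topminor_model (phi : VH -> VT) : simple_digraph EH ->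
  injective phi -> (forall u v, EH u v -> ET (phi u) (phi v)) ->
  is_topminor_model EH ET phi (fun _ _ => [::]).
Proof.
move=> loopless phi_inj phi_arc; split=> // u v EHuv /=.
rewrite phi_arc // inE (inj_eq phi_inj); split=> //; rewrite andbT.
by apply: contraTneq EHuv => ->; apply: loopless.
Qed.

Lemma tm_vset_nil (phi : VH -> VT) :
  tm_vset EH phi (fun _ _ => [::]) = [set phi w | w : VH].
Proof.
apply/setP => x; rewrite inE; apply/idP/imsetP => [|[w _ ->]].
  case/orP => [/existsP [w /eqP <-]|/existsP [u /existsP [v /andP []]]] //.
  by exists w.
by apply/orP; left; apply/existsP; exists w.
Qed.

Lemma topminor_in_set0_disjoint_copies k :
  contains_topminor_in EH ET set0 -> contains_k_disjoint_topminors EH ET k.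
Proof.
case=> phi [P [model sub]]; exists (fun=> phi), (fun=> P); split=> // i j _.
by rewrite subset0 in sub; rewrite (eqP sub) -setI_eq0 set0I.
Qed.

Lemma large_tournament_disjoint_topminors k :
  simple_digraph EH -> acyclic EH -> tournament ET -> 0 < k ->
  2 ^ #|VH| * k <= #|VT| -> contains_k_disjoint_topminors EH ET k.
Proof.
move=> loopless acEH tourET k_gt0 geVT.
have /card_gt0P [x0 _] : 0 < #|VT|.
  by apply: leq_trans geVT; rewrite muln_gt0 expn_gt0.
have [ord [ord_inj ord_lt ord_mono]] := acyclic_topological_numbering acEH.
have geT : 2 ^ #|VH| * k <= #|[set: VT]| by rewrite cardsT.
have [t [tP _ tdis]] := tournament_disjoint_transitive_seqs tourET geT.
have embed (i : 'I_k) := transitive_seq_embedding x0 ord_inj ord_lt ord_mono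
  tourET.1 (tP i (ltn_ord i)).2 (eq_leq (esym (tP i (ltn_ord i)).1)).
exists (fun i u => nth x0 (t i) (ord u)), (fun _ _ _ => [::]); split.
  by move=> i; have [inj _ arc] := embed i; apply: subgraph_topminor_model.
move=> i j ij; rewrite !tm_vset_nil.
have img_sub (l : 'I_k) : [set nth x0 (t l) (ord w) | w : VH] \subset t l.
  by apply/subsetP => _ /imsetP [w _ ->]; have [_ ->] := embed l.
exact: disjointW (img_sub i) (img_sub j) (tdis i j (ltn_ord i) (ltn_ord j) ij).
Qed.

End Embedding.

Theorem corollary20 (VH : finType) (EH : rel VH) (VT : finType) (ET : rel VT)
  (k : nat) :
  simple_digraph EH -> acyclic EH -> 0 < k -> tournament ET ->
  ~ contains_k_disjoint_topminors EH ET k ->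
  exists X : {set VT},
    #|X| <= 2 ^ #|VH| * k /\ ~ contains_topminor_in EH ET (~: X).
Proof.
move=> loopless acEH k_gt0 tourET no_copies.
have [geVT|ltVT] := leqP (2 ^ #|VH| * k) #|VT|.
  by case: no_copies; apply: large_tournament_disjoint_topminors.
exists setT; split; first by rewrite cardsT ltnW.
by rewrite setCT => /(topminor_in_set0_disjoint_copies k).
Qed.
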